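(* Let $T_i,T_j$ be indecomposable summands of a basic maximal rigid object $T$ of $\mathcal{C}_n$, and let $T_1$ be the top summand of $T$. The following are equivalent: (a) there is a nonzero $\mathcal{D}$-map $T_i\to T_j$; (b) either (b') there is a non-degenerate $T$-subwing triple $(T_x;T_y,T_z)$ such that $T_i$ is on the left edge of $\mathcal{W}_{T_z}$ and $T_j$ is on the right edge of $\mathcal{W}_{T_y}$, or (b'') $T_i$ is on the left edge of $\mathcal{W}_{T_1}$ and $T_j$ is on the right edge of $\mathcal{W}_{T_1}$.
   Context: Let $k$ be algebraically closed, $n\ge2$, $\mathcal{T}_n$ the tube of rank $n$ (finite-dimensional nilpotent representations of the cyclically oriented $\tilde A_{n-1}$-quiver; AR-translation $\tau$), $\mathcal{C}_n=D^b(\mathcal{T}_n)/\tau^{-1}[1]$ the cluster tube, with indecomposables identified with those of $\mathcal{T}_n$. Indecomposables have coordinates $(a,b)$, $a\in\mathbb{Z}/n$, $b\ge1$ the quasilength, with $\tau(a,b)=(a-1,b)$ and irreducible maps $(a,b)\to(a,b+1)$ and $(a,b)\to(a+1,b-1)$. For indecomposables $X,Y$, $\operatorname{Hom}_{\mathcal{C}_n}(X,Y)=\operatorname{Hom}_{\mathcal{T}_n}(X,Y)\oplus\operatorname{Hom}_{D^b}(X,\tau^{-1}Y[1])$, the second summand $\cong D\operatorname{Hom}_{\mathcal{T}_n}(Y,\tau^2X)$; its elements are $\mathcal{D}$-maps. For $X=(a,i)$, $i\le n-1$, the wing $\mathcal{W}_X=\{(a+s,i'):s\ge0,i'\ge1,s+i'\le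 i\}$ has left edge $\{(a,i'):1\le i'\le i\}$ and right edge $\{(a+i-i',i'):1\le i'\le i\}$. $T$ is maximal rigid if $\operatorname{Ext}^1_{\mathcal{C}_n}(T,T)=0$ and $\operatorname{Ext}^1(T\oplus X,T\oplus X)=0$ implies $X\in\operatorname{add}T$; a basic one has a unique summand $T_1$ (top summand) of quasilength $n-1$, and all summands lie in $\mathcal{W}_{T_1}$. A non-degenerate subwing triple $(X;Y,Z)$: $X=(a,b)$ with $3\le b\le n-1$, $Y=(a,c)$, $Z=(a+c+1,b-c-1)$ for some $1\le c\le b-2$; it is a $T$-subwing triple if $X,Y,Z$ are summands of $T$. *)

From mathcomp Require Import all_boot.
Set Implicit Arguments. Unset Strict Implicit. Unset Printing Implicit Defensive.

(* An indecomposable is a pair (a, b) : nat * nat with a < n (a represents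
   the class of a in Z/n) and b >= 1 (quasilength).
   Conventions (as in the paper): tau (a,b) = (a-1,b); irreducible maps
   (a,b) -> (a,b+1) (mono) and (a,b) -> (a+1,b-1) (epi).  Hence (a,b) is the
   uniserial module whose length-k submodule is (a,k) and whose length-k
   quotient is (a+b-k,k). *)

Definition ind := (nat * nat)%type.

Definition valid (n : nat) (X : ind) : bool := (X.1 < n) && (0 < X.2).

Definition tau (n : nat) (X : ind) : ind := ((X.1 + n.-1) %% n, X.2).

(* dim Hom_{T_n}(X, Y) for uniserial X, Y: the number of k, 1 <= k <= min(b,d),
   such that the length-k quotient (a+b-k, k) of X = (a,b) is isomorphic to the
   length-k submodule (c, k) of Y = (c,d). *)
Definition dimHomT (n : nat) (X Y : ind) : nat :=
  count (fun k => X.1 + X.2 - k == Y.1 %[mod n]) (iota 1 (minn X.2 Y.2)).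

Definition homT (n : nat) (X Y : ind) : bool := 0 < dimHomT n X Y.

(* Ext^1_{T_n}(X,Y) = D Hom_{T_n}(Y, tau X) (AR formula, hereditary). *)
Definition extT (n : nat) (X Y : ind) : bool := homT n Y (tau n X).

(* Ext^1_{C_n}(X,Y) = Ext^1_{T_n}(X,Y) (+) D Ext^1_{T_n}(Y,X). *)
Definition extC (n : nat) (X Y : ind) : bool := extT n X Y || extT n Y X.

(* There is a nonzero D-map X -> Y, i.e. Hom_{D^b}(X, tau^{-1} Y[1])
   = D Hom_{T_n}(Y, tau^2 X) is nonzero. *)
Definition Dmap (n : nat) (X Y : ind) : bool := homT n Y (tau n (tau n X)).

(* A basic object is represented by the duplicate-free list of its
   indecomposable summands.  Ext^1 is additive, so Ext^1(T,T) = 0 iff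
   Ext^1 vanishes on all pairs of summands. *)
Definition rigid (n : nat) (T : seq ind) : Prop :=
  forall X Y, X \in T -> Y \in T -> ~~ extC n X Y.

Definition basic_maximal_rigid (n : nat) (T : seq ind) : Prop :=
  all (valid n) T /\ uniq T /\ rigid n T /\
  (forall X, valid n X -> rigid n (X :: T) -> X \in T).

Definition left_edge (n : nat) (X Y : ind) : Prop :=
  Y.1 = X.1 /\ 1 <= Y.2 <= X.2.

Definition right_edge (n : nat) (X Y : ind) : Prop :=
  Y.1 = (X.1 + X.2 - Y.2) %% n /\ 1 <= Y.2 <= X.2.

Definition subwing_triple (n : nat) (X Y Z : ind) : Prop :=
  3 <= X.2 <= n.-1 /\
  exists c, 1 <= c <= X.2 - 2 /\ Y = (X.1, c) /\
            Z = ((X.1 + c + 1) %% n, X.2 - c - 1).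

Definition T_subwing_triple (n : nat) (T : seq ind) (X Y Z : ind) : Prop :=
  [/\ X \in T, Y \in T, Z \in T & subwing_triple n X Y Z].

From mathcomp Require Import all_boot zify.

Set Implicit Arguments.
Unset Strict Implicit.

(* Measured from the base T1.1 of the top summand T1, every summand X of T sits
   in the wing of T1 and is encoded by the arc [p, p + X.2] of positions, with
   p + X.2 <= n - 1; there Ext^1 between two summands is a crossing of their
   arcs, and a nonzero D-map T_i -> T_j means that the arc of T_i starts right
   after the arc of T_j ends, or that the two arcs touch the two ends of the
   wing of T1.  Given such adjacent arcs, the shortest summand T_x whose arc
   covers both splits at the junction into two arcs crossing no summand, so by
   maximality they are summands T_y, T_z, and (T_x; T_y, T_z) is the required
   subwing triple. *)

Lemma modnD_subn n r s : r < n -> s <= n ->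
  (r + (n - s)) %% n = if s <= r then r - s else r + n - s.
Proof.
move=> lt_rn le_sn; case: ifP => le_sr; last by rewrite modn_small; lia.
have -> : r + (n - s) = r - s + n by lia.
by rewrite modnDr modn_small //; lia.
Qed.

Lemma has_argmin (A : eqType) (P : pred A) (f : A -> nat) (s : seq A) :
  has P s -> exists x, [/\ x \in s, P x & forall y, y \in s -> P y -> f x <= f y].
Proof.
case/hasP=> x0 x0s Px0.
have ex_m : exists m, has (fun x => P x && (f x == m)) s.
  by exists (f x0); apply/hasP; exists x0; rewrite ?Px0 ?eqxx.
case: (ex_minnP ex_m) => m /hasP[x xs /andP[Px /eqP <-]] min_m.
by exists x; split=> // y ys Py; apply: min_m; apply/hasP; exists y; rewrite ?Py ?eqxx.
Qed.

Definition arc_cross (A B : nat * nat) : Prop := B.1 < A.1 <= B.2 /\ B.2 < A.2.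

Definition arc_compatible (A B : nat * nat) : Prop :=
  ~ arc_cross A B /\ ~ arc_cross B A.

Lemma arc_compatible_split (W : nat * nat) (px pj qj qi qx : nat) :
  W.1 < W.2 -> px <= pj -> pj < qj -> qj.+1 < qi -> qi <= qx ->
  arc_compatible W (px, qx) -> arc_compatible W (pj, qj) ->
  arc_compatible W (qj.+1, qi) ->
  (W.1 <= pj -> qi <= W.2 -> qx - px <= W.2 - W.1) ->
  arc_compatible W (px, qj) /\ arc_compatible W (qj.+1, qx).
Proof. rewrite /arc_compatible /arc_cross /=; lia. Qed.

Section RelativePositions.

Variables (n t : nat).
Hypotheses (n_ge2 : 2 <= n) (t_lt_n : t < n).
Let n_gt0 : 0 < n := ltnW n_ge2.

Definition relpos (u : nat) : nat := (u + (n - t)) %% n.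

Definition arc (X : ind) : nat * nat := (relpos X.1, relpos X.1 + X.2).

Definition in_wing (X : ind) : Prop := relpos X.1 + X.2 <= n.-1 /\ 0 < X.2.

Lemma relpos_lt u : relpos u < n.
Proof. by rewrite ltn_pmod //; lia. Qed.

Lemma relpos_mod u : relpos (u %% n) = relpos u.
Proof. by rewrite /relpos modnDml. Qed.

Lemma relposD u m : relpos (u + m) = (relpos u + m) %% n.
Proof. by rewrite /relpos modnDml addnAC. Qed.

Lemma relpos_base : relpos t = 0.
Proof. by rewrite /relpos subnKC ?modnn //; lia. Qed.

Lemma eq_relpos u v : (relpos u = relpos v) <-> (u = v %[mod n]).
Proof.
split=> [/(congr1 (fun w => (w + t) %% n)) | e]; last by rewrite -relpos_mod e relpos_mod.
by rewrite !modnDml -!addnA subnK ?modnDr //; lia.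
Qed.

Lemma relpos_inj u v : u < n -> v < n -> relpos u = relpos v -> u = v.
Proof. by move=> lt_un lt_vn /eq_relpos; rewrite !modn_small. Qed.

Lemma homT_relpos (X Y : ind) : homT n X Y <->
  exists k, [/\ 0 < k, k <= X.2, k <= Y.2 &
                (relpos X.1 + (X.2 - k)) %% n = relpos Y.1].
Proof.
rewrite /homT /dimHomT -has_count; split.
  case/hasP=> k; rewrite mem_iota => /andP[k_gt0 k_le] /eqP/eq_relpos e.
  exists k; split; [lia | lia | lia |].
  by rewrite -relposD -e; congr relpos; lia.
case=> k [k_gt0 kX kY e]; apply/hasP; exists k.
  by rewrite mem_iota; apply/andP; split; lia.
by apply/eqP/eq_relpos; rewrite -e -relposD; congr relpos; lia.
Qed.

Lemma relpos_tau (X : ind) : relpos (tau n X).1 = (relpos X.1 + (n - 1)) %% n.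
Proof. by rewrite /= relpos_mod relposD subn1. Qed.

Lemma relpos_tau2 (X : ind) : relpos (tau n (tau n X)).1 = (relpos X.1 + (n - 2)) %% n.
Proof.
rewrite relpos_tau relpos_tau modnDml.
have -> : relpos X.1 + (n - 1) + (n - 1) = relpos X.1 + (n - 2) + n by lia.
by rewrite modnDr.
Qed.

Lemma extT_arc (X Y : ind) :
  in_wing X -> in_wing Y -> extT n X Y <-> arc_cross (arc X) (arc Y).
Proof.
move=> [wX pX] [wY pY]; rewrite /extT homT_relpos relpos_tau.
rewrite modnD_subn ?relpos_lt //= /arc_cross /=.
case: ifP => hr; split=> [[k [k_gt0 kY kX e]]|cr]; try by rewrite modn_small in e; lia.
- exists (relpos Y.1 + Y.2 + 1 - relpos X.1); split; try lia.
  by rewrite modn_small; lia.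
- exfalso; lia.
Qed.

Lemma extC_arc (X Y : ind) :
  in_wing X -> in_wing Y -> ~~ extC n X Y <-> arc_compatible (arc X) (arc Y).
Proof.
move=> wX wY; rewrite /extC negb_or /arc_compatible -(extT_arc wX wY) -(extT_arc wY wX).
by split=> [/andP[/negP ? /negP ?] | [/negP ? /negP ?]] //; apply/andP.
Qed.

Lemma Dmap_noncrossing (X Y : ind) : in_wing X -> in_wing Y -> ~ arc_cross (arc X) (arc Y) ->
  Dmap n X Y <-> relpos X.1 = (relpos Y.1 + Y.2).+1 \/
                 (relpos X.1 = 0 /\ relpos Y.1 + Y.2 = n.-1).
Proof.
move=> [wX pX] [wY pY]; rewrite /arc_cross /= => ncr.
rewrite /Dmap homT_relpos relpos_tau2 modnD_subn ?relpos_lt //=.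
case: ifP => hr; split=> [[k [k_gt0 kY kX e]]|adj]; try by rewrite modn_small in e; lia.
- exists (relpos Y.1 + Y.2 + 2 - relpos X.1); split; try lia.
  by rewrite modn_small; lia.
- exists 1; split; try lia.
  by rewrite modn_small; lia.
Qed.

Lemma in_wing_of_noext (T1 X : ind) :
  T1.1 = t -> T1.2 = n.-1 -> 0 < X.2 ->
  ~~ extT n X X -> ~~ extT n X T1 -> in_wing X.
Proof.
move=> base len pX /negP noselfext /negP noext; split=> //.
have hX : X.2 <= n.-1.
  rewrite leqNgt; apply/negP => hX; apply: noselfext.
  rewrite /extT homT_relpos relpos_tau /=; exists (X.2 - n.-1); split; try lia.
  by congr (_ %% _); lia.
rewrite leqNgt; apply/negP => hw; apply: noext.
rewrite /extT homT_relpos base relpos_base len relpos_tau /=.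
rewrite modnD_subn ?relpos_lt //.
have ltX := relpos_lt X.1; exists (n - relpos X.1); split; try lia.
by case: ifP => ?; rewrite modn_small; lia.
Qed.

Lemma left_edge_relpos (X I : ind) : X.1 < n -> I.1 < n ->
  left_edge n X I <-> relpos I.1 = relpos X.1 /\ 1 <= I.2 <= X.2.
Proof.
move=> ltX ltI; split=> [[-> ->] // | [e ?]]; split=> //.
exact: relpos_inj e.
Qed.

Lemma right_edge_relpos (X J : ind) : relpos X.1 + X.2 < n -> J.1 < n ->
  right_edge n X J <-> relpos J.1 + J.2 = relpos X.1 + X.2 /\ 1 <= J.2 <= X.2.
Proof.
move=> wX ltJ.
have pos_end : J.2 <= X.2 -> relpos ((X.1 + X.2 - J.2) %% n) = relpos X.1 + X.2 - J.2.
  move=> le; rewrite relpos_mod -addnBA // relposD modn_small; lia.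
split=> [[e b]|[e b]]; split=> //.
  by rewrite e pos_end; lia.
apply: relpos_inj; rewrite ?ltn_pmod ?pos_end //; lia.
Qed.

Lemma subwing_triple_adjacent (X Y Z I J : ind) :
  X.1 < n -> relpos X.1 + X.2 < n -> I.1 < n -> J.1 < n ->
  subwing_triple n X Y Z -> left_edge n Z I -> right_edge n Y J ->
  relpos I.1 = (relpos J.1 + J.2).+1.
Proof.
move=> ltX wX ltI ltJ [bX [c [bc [-> ->]]]].
rewrite left_edge_relpos ?ltn_pmod //.
rewrite right_edge_relpos //=; last lia.
move=> [-> _] [-> _]; rewrite relpos_mod -addnA relposD modn_small; lia.
Qed.

Section Summands.

Variables (T : seq ind) (T1 : ind).
Hypotheses (T_valid : all (valid n) T) (T_rigid : rigid n T)
  (T_maximal : forall X, valid n X -> rigid n (X :: T) -> X \in T)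
  (T1_in : T1 \in T) (T1_base : T1.1 = t) (T1_len : T1.2 = n.-1).

Lemma summand_valid (X : ind) : X \in T -> X.1 < n /\ 0 < X.2.
Proof. by move=> X_in; have /andP[] := allP T_valid X X_in. Qed.

Lemma summand_in_wing (X : ind) : X \in T -> in_wing X.
Proof.
move=> X_in; have [_ pX] := summand_valid X_in.
have := T_rigid X_in X_in; have := T_rigid X_in T1_in.
rewrite /extC !negb_or => /andP[noext _] /andP[noselfext _].
exact: (in_wing_of_noext T1_base T1_len).
Qed.

Lemma summands_compatible (X Y : ind) :
  X \in T -> Y \in T -> arc_compatible (arc X) (arc Y).
Proof.
move=> X_in Y_in.
by apply/(extC_arc (summand_in_wing X_in) (summand_in_wing Y_in))/T_rigid.
Qed.

Lemma Dmap_summands (X Y : ind) : X \in T -> Y \in T ->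
  Dmap n X Y <-> relpos X.1 = (relpos Y.1 + Y.2).+1 \/
                 (relpos X.1 = 0 /\ relpos Y.1 + Y.2 = n.-1).
Proof.
move=> X_in Y_in; apply: Dmap_noncrossing; try exact: summand_in_wing.
by case: (summands_compatible X_in Y_in).
Qed.

Lemma summand_of_compatible (V : ind) : valid n V -> in_wing V ->
  (forall W : ind, W \in T -> arc_compatible (arc W) (arc V)) -> V \in T.
Proof.
move=> vV wV compV; apply: T_maximal => // X Y.
have compat U U' : U \in V :: T -> U' \in V :: T -> arc_compatible (arc U) (arc U').
  rewrite !inE => /orP[/eqP->|U_in] /orP[/eqP->|U'_in].
  - by rewrite /arc_compatible /arc_cross; lia.
  - by case: (compV U' U'_in).
  - exact: compV.
  - exact: summands_compatible.
have wing U : U \in V :: T -> in_wing U.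
  by rewrite inE => /orP[/eqP->|/summand_in_wing].
by move=> X_in Y_in; apply/(extC_arc (wing X X_in) (wing Y Y_in))/compat.
Qed.

Lemma exists_subwing_triple (I J : ind) : I \in T -> J \in T ->
  relpos I.1 = (relpos J.1 + J.2).+1 ->
  exists X Y Z : ind, T_subwing_triple n T X Y Z /\ left_edge n Z I /\ right_edge n Y J.
Proof.
move=> I_in J_in adj.
have [[wI pI] [wJ pJ]] := (summand_in_wing I_in, summand_in_wing J_in).
have [ltI _] := summand_valid I_in; have [ltJ _] := summand_valid J_in.
pose covers (W : ind) := (relpos W.1 <= relpos J.1) && (relpos I.1 + I.2 <= relpos W.1 + W.2).
have [X [X_in X_cov X_min]] : exists X : ind,
    [/\ X \in T, covers X & forall W : ind, W \in T -> covers W -> X.2 <= W.2].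
  apply: has_argmin; apply/hasP; exists T1 => //.
  by rewrite /covers T1_base relpos_base T1_len leq0n add0n.
have [[wX pX] [ltX _]] := (summand_in_wing X_in, summand_valid X_in).
move: X_cov; rewrite /covers => /andP[XJ XI].
pose Y : ind := (X.1, relpos J.1 + J.2 - relpos X.1).
pose Z : ind := ((X.1 + Y.2 + 1) %% n, X.2 - Y.2 - 1).
have pZ : relpos Z.1 = (relpos J.1 + J.2).+1.
  by rewrite relpos_mod -addnA relposD /= modn_small; lia.
have [arcY arcZ] : arc Y = (relpos X.1, relpos J.1 + J.2) /\
                   arc Z = ((relpos J.1 + J.2).+1, relpos X.1 + X.2).
  by rewrite /arc pZ /=; split; congr pair; lia.
have split_compatible (W : ind) : W \in T ->
    arc_compatible (arc W) (arc Y) /\ arc_compatible (arc W) (arc Z).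
  move=> W_in; have [_ pW] := summand_in_wing W_in.
  have := summands_compatible W_in I_in; rewrite {2}/arc adj arcY arcZ => compI.
  apply: (arc_compatible_split (pj := relpos J.1) (qi := (relpos J.1 + J.2).+1 + I.2));
    rewrite /=; try lia; try exact: summands_compatible; try exact: compI.
  move=> WJ WI; have := X_min W W_in; rewrite /covers WJ adj WI; lia.
have Y_in : Y \in T.
  apply: summand_of_compatible => [||W /split_compatible[] //].
    by rewrite /valid /=; lia.
  by rewrite /in_wing /=; lia.
have Z_in : Z \in T.
  apply: summand_of_compatible => [||W /split_compatible[] //].
    by rewrite /valid ltn_pmod //=; lia.
  by rewrite /in_wing pZ /=; lia.
exists X, Y, Z; split; [split=> // | split].
- split; first lia.
  by exists Y.2; split; [rewrite /=; lia | split].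
- by rewrite left_edge_relpos ?ltn_pmod ?pZ //=; split; [exact: adj | lia].
- by rewrite right_edge_relpos //=; [split|]; lia.
Qed.

Lemma Dmap_summands_iff (I J : ind) : I \in T -> J \in T ->
  Dmap n I J <->
    (exists X Y Z : ind, T_subwing_triple n T X Y Z /\ left_edge n Z I /\ right_edge n Y J)
    \/ (left_edge n T1 I /\ right_edge n T1 J).
Proof.
move=> I_in J_in; rewrite Dmap_summands //.
have [[ltI _] [ltJ _]] := (summand_valid I_in, summand_valid J_in).
have [lt1 _] := summand_valid T1_in.
have [[wI pI] [wJ pJ]] := (summand_in_wing I_in, summand_in_wing J_in).
have w1 : relpos T1.1 + T1.2 < n by rewrite T1_base relpos_base T1_len; lia.
rewrite (left_edge_relpos lt1 ltI) (right_edge_relpos w1 ltJ) T1_base relpos_base T1_len.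
split.
- case=> [adj | [rI qJ]]; last by right; split; split; lia.
  by left; apply: exists_subwing_triple.
- case=> [[X [Y [Z [[X_in _ _ sw] [le re]]]]] | [[rI _] [qJ _]]]; last by right; lia.
  left; have [[wX _] [ltX _]] := (summand_in_wing X_in, summand_valid X_in).
  by apply: (subwing_triple_adjacent ltX _ ltI ltJ sw le re); lia.
Qed.

End Summands.

End RelativePositions.

Theorem lemma2p9 (n : nat) (T : seq ind) (T1 Ti Tj : ind) :
  2 <= n ->
  basic_maximal_rigid n T ->
  T1 \in T -> T1.2 = n.-1 ->
  Ti \in T -> Tj \in T ->
  (Dmap n Ti Tj <->
     ((exists Tx Ty Tz : ind, T_subwing_triple n T Tx Ty Tz /\
                              left_edge n Tz Ti /\ right_edge n Ty Tj)
      \/ (left_edge n T1 Ti /\ right_edge n T1 Tj))).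
Proof.
move=> n_ge2 [T_valid [_ [T_rigid T_maximal]]] T1_in T1_len.
have [t_lt_n _] := summand_valid T_valid T1_in.
exact: (Dmap_summands_iff n_ge2 t_lt_n T_valid T_rigid T_maximal T1_in erefl T1_len).
Qed.
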